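(* Let $n\ge 1$, $k\ge 2$, $\mathcal{K}$ a set of size $k$, $\epsilon\ge 0$ and $p=e^\epsilon/(k-1+e^\epsilon)$. Then $\mathbf{S}\mathbf{N}\equiv\mathbf{S}^r\mathbf{N}^r$.
   Context: A dataset is $x\in\mathcal{K}^n$; its histogram $h(x)$ is the map $\kappa\mapsto|\{i:x_i=\kappa\}|$; $\mathcal{Z}$ is the set of histograms and $\#z$ the number of datasets with histogram $z$. Channels are row-stochastic matrices; cascading is matrix multiplication. Full $k$-RR channel $\mathbf{N}:\mathcal{K}^n\to\mathcal{K}^n$: $\mathbf{N}_{x,y}=\prod_{i=0}^{n-1}q(y_i\mid x_i)$, $q(b\mid a)=p$ if $b=a$, $(1-p)/(k-1)$ otherwise. Shuffle channel $\mathbf{S}:\mathcal{K}^n\to\mathcal{K}^n$: $\mathbf{S}_{x,y}=1/\#h(x)$ if $h(y)=h(x)$, else $0$. Reduced shuffle $\mathbf{S}^r:\mathcal{K}^n\to\mathcal{Z}$: $\mathbf{S}^r_{x,z}=1$ if $h(x)=z$, else $0$. Reduced $k$-RR $\mathbf{N}^r:\mathcal{Z}\to\mathcal{Z}$: $\mathbf{N}^r_{z',z}=\frac{1}{\#z'}\sum_{x':h(x')=z'}\sum_{y:h(y)=z}\mathbf{N}_{x',y}$. For prior $\pi$ and gain function $g:\mathcal{W}\times\mathcal{X}\to[0,\infty)$ ($\mathcal{W}$ finite nonempty), $V_g[\pi\triangleright\mathbf{C}]=\sum_{y}\max_{w}\sum_{x}\pi_x\mathbf{C}_{x,y}g(w,x)$;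 channels with the same input set are equivalent ($\equiv$) iff they have equal posterior vulnerability for all priors and gain functions. *)

From HB Require Import structures.
From mathcomp Require Import all_boot all_order all_algebra.
From mathcomp Require Import reals.
From mathcomp.analysis Require Import sequences exp.
Set Implicit Arguments. Unset Strict Implicit. Unset Printing Implicit Defensive.
Import Order.TTheory GRing.Theory Num.Theory.
Local Open Scope ring_scope.

Section Channels.
Variable R : realType.

(* A channel from X to Y is a matrix X -> Y -> R (row-stochastic by construction below). *)
Definition channel (X Y : finType) := X -> Y -> R.

Definition cascade (X M Y : finType) (C : channel X M) (D : channel M Y) : channel X Y :=
  fun x y => \sum_(m : M) C x m * D m y.

(* maximum over a (nonempty) finite type; 0 if empty (never used: W nonempty) *)
Definition fmax (W : finType) (F : W -> R) : R :=
  match [pick w : W] with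
  | Some w0 => \big[Num.max/F w0]_(w : W) F w
  | None => 0
  end.

Definition Vg (X Y W : finType) (pi : X -> R) (C : channel X Y) (g : W -> X -> R) : R :=
  \sum_(y : Y) fmax (fun w : W => \sum_(x : X) pi x * C x y * g w x).

Definition chan_equiv (X Y1 Y2 : finType) (C1 : channel X Y1) (C2 : channel X Y2) : Prop :=
  forall (W : finType), (0 < #|W|)%N ->
  forall (pi : X -> R) (g : W -> X -> R),
    (forall x, 0 <= pi x) -> \sum_(x : X) pi x = 1 ->
    (forall w x, 0 <= g w x) ->
    Vg pi C1 g = Vg pi C2 g.

Variables (K : finType) (n : nat).

Definition dataset := {ffun 'I_n -> K}.

Definition hist (x : dataset) : {ffun K -> nat} := [ffun a => #|[set i | x i == a]|].

(* The set Z of histograms: maps K -> nat summing to n (values are <= n). *)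
Definition histZ := {z : {ffun K -> 'I_n.+1} | (\sum_(a : K) (z a : nat))%N == n}.
Definition zfun (z : histZ) : {ffun K -> nat} := [ffun a => (val z a : nat)].

Definition numds (z : {ffun K -> nat}) : nat := #|[set x : dataset | hist x == z]|.

Definition q (p : R) (b a : K) : R :=
  if b == a then p else (1 - p) / (#|K|%:R - 1).

Definition kRR (p : R) : channel dataset dataset :=
  fun x y => \prod_(i < n) q p (y i) (x i).

Definition shuffle : channel dataset dataset :=
  fun x y => if hist y == hist x then 1 / (numds (hist x))%:R else 0.

Definition rshuffle : channel dataset histZ :=
  fun x z => if hist x == zfun z then 1 else 0.

Definition rkRR (p : R) : channel histZ histZ :=
  fun z' z => 1 / (numds (zfun z'))%:R *
    \sum_(x' : dataset | hist x' == zfun z') \sum_(y : dataset | hist y == zfun z) kRR p x' y.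

End Channels.

From HB Require Import structures.
From mathcomp Require Import all_boot all_order all_algebra.
From mathcomp Require Import fingroup perm.
From mathcomp Require Import reals.
From mathcomp.analysis Require Import sequences exp.
Import Order.TTheory GRing.Theory Num.Theory.
Local Open Scope ring_scope.

(* k-RR acts coordinatewise, so it commutes with permutations of the n
   positions, and the shuffle is permutation invariant; hence the columns of
   SN are constant on each histogram class.  S^r N^r is SN with the columns
   of each class added up, and merging equal columns does not change any
   posterior g-vulnerability, because the maximum over guesses is positively
   homogeneous.  The argument works for every p. *)

Section MergeColumns.
Variables (R : realType) (X Y Z W : finType).

Lemma eq_fmax (F G : W -> R) : F =1 G -> fmax F = fmax G.
Proof.
move=> FG; rewrite /fmax; case: pickP => // w0 _.
by rewrite FG; apply: eq_bigr => w _.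
Qed.

Lemma fmax_mulrn (F : W -> R) N : fmax (fun w => F w *+ N) = fmax F *+ N.
Proof.
rewrite /fmax; case: pickP => [w0 _|_]; last by rewrite mul0rn.
have maxMn : {morph (fun a : R => a *+ N) : a b / Num.max a b >-> Num.max a b}.
  by move=> a b /=; rewrite -[a *+ N]mulr_natl -[b *+ N]mulr_natl
    -[Num.max a b *+ N]mulr_natl maxr_pMr ?ler0n.
by rewrite (big_morph _ maxMn (erefl _)).
Qed.

Lemma fmax0 : fmax (fun _ : W => 0 : R) = 0.
Proof.
rewrite /fmax; case: pickP => // w0 _.
by elim/big_ind: _ => // a b -> ->; rewrite maxxx.
Qed.

Lemma Vg_merge_columns (f : Y -> Z) (C : channel R X Y) (D : channel R X Z)
    (pi : X -> R) (g : W -> X -> R) :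
  (forall x y y', f y = f y' -> C x y = C x y') ->
  (forall x z, D x z = \sum_(y | f y == z) C x y) ->
  Vg pi C g = Vg pi D g.
Proof.
move=> Cf DE; rewrite /Vg (partition_big f predT) //=; apply: eq_bigr => z _.
have [y0 /eqP <-|fiber0] := pickP (fun y => f y == z); last first.
  rewrite big_pred0 // -[LHS]fmax0; apply: eq_fmax => w; rewrite big1 // => x _.
  by rewrite DE big_pred0 // mulr0 mul0r.
rewrite (eq_bigr (fun _ => fmax (fun w => \sum_x pi x * C x y0 * g w x))); last first.
  by move=> y /eqP fy; apply: eq_fmax => w; apply: eq_bigr => x _; rewrite (Cf x y y0).
rewrite sumr_const -fmax_mulrn; apply: eq_fmax => w; rewrite -sumrMnl.
apply: eq_bigr => x _; rewrite DE (eq_bigr (fun _ => C x y0)); last first.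
  by move=> y /eqP; apply: Cf.
by rewrite sumr_const mulrnAr mulrnAl.
Qed.

End MergeColumns.

Section ShuffleKRR.
Variables (R : realType) (K : finType) (n : nat).
Implicit Types (x y : dataset K n) (s : 'S_n) (p : R).

Definition permds s y : dataset K n := [ffun i => y (s i)].

Lemma permds_inj s : injective (permds s).
Proof.
move=> x y /ffunP xy; apply/ffunP => i; have := xy ((s^-1)%g i).
by rewrite !ffunE permKV.
Qed.

Lemma hist_permds s y : hist (permds s y) = hist y.
Proof.
apply/ffunP => a; rewrite !ffunE.
have -> : [set i | permds s y i == a] = s @^-1: [set i | y i == a].
  by apply/setP => i; rewrite !inE ffunE.
by rewrite card_preimset //; apply: perm_inj.
Qed.

Lemma count_mem_hist y a : count_mem a [tuple y i | i < n] = hist y a.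
Proof.
rewrite /= count_map ffunE cardE /enum_mem -size_filter /=.
congr size; rewrite -filter_predI; apply: eq_filter => i /=.
by rewrite andbT in_set.
Qed.

Lemma eq_hist_permds y y' : hist y = hist y' -> exists s, y' = permds s y.
Proof.
move=> hyy'.
have : perm_eq [tuple y' i | i < n] [tuple y i | i < n].
  by apply/allP => a _; rewrite /= !count_mem_hist hyy'.
case/tuple_permP => s yy'; exists s; apply/ffunP => i.
have := congr1 (fun t : n.-tuple K => tnth t i) (val_inj yy').
by rewrite /= !tnth_mktuple ffunE.
Qed.

Lemma kRR_permds p s x y : kRR p (permds s x) (permds s y) = kRR p x y.
Proof.
rewrite /kRR [RHS](reindex_inj (@perm_inj _ s)).
by apply: eq_bigr => i _; rewrite !ffunE.
Qed.

Lemma shuffle_kRR_permds p s x y :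
  cascade (@shuffle R K n) (kRR p) x (permds s y)
  = cascade (@shuffle R K n) (kRR p) x y.
Proof.
rewrite /cascade [LHS](reindex_inj (@permds_inj s)).
by apply: eq_bigr => m _; rewrite kRR_permds /shuffle hist_permds.
Qed.

Lemma shuffle_kRR_hist p x y y' : hist y = hist y' ->
  cascade (@shuffle R K n) (kRR p) x y = cascade (@shuffle R K n) (kRR p) x y'.
Proof. by case/eq_hist_permds => s ->; rewrite shuffle_kRR_permds. Qed.

Lemma hist_lt y a : (hist y a < n.+1)%N.
Proof. by rewrite ffunE ltnS; apply: leq_trans (max_card _) _; rewrite card_ord. Qed.

Lemma sum_hist y : (\sum_a hist y a)%N = n.
Proof.
rewrite -[RHS]card_ord -sum1_card (partition_big y predT) //=.
apply: eq_bigr => a _; rewrite ffunE -sum1_card.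
by apply: eq_bigl => i; rewrite inE.
Qed.

Lemma sum_hist_ord y :
  (\sum_a ([ffun a => Ordinal (hist_lt y a)] : {ffun K -> 'I_n.+1}) a : nat) == n.
Proof. by apply/eqP; rewrite -[RHS](sum_hist y); apply: eq_bigr => a _; rewrite ffunE. Qed.

Definition histz y : histZ K n := exist _ [ffun a => Ordinal (hist_lt y a)] (sum_hist_ord y).

Lemma zfun_histz y : zfun (histz y) = hist y.
Proof. by apply/ffunP => a; rewrite !ffunE. Qed.

Lemma zfun_inj : injective (@zfun K n).
Proof.
move=> z1 z2 /ffunP z12; apply/val_inj/ffunP => a; apply/val_inj.
by have := z12 a; rewrite !ffunE.
Qed.

Lemma histz_eq y z : (histz y == z) = (hist y == zfun z).
Proof. by rewrite -zfun_histz; apply/eqP/eqP => [->|/zfun_inj]. Qed.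

Lemma rshuffle_rkRR_sum p x z :
  cascade (@rshuffle R K n) (rkRR p) x z
  = \sum_(y | histz y == z) cascade (@shuffle R K n) (kRR p) x y.
Proof.
rewrite /cascade (bigD1 (histz x)) //= big1 ?addr0; last first.
  move=> z' z'x; rewrite /rshuffle; case: eqP => [xz'|]; last by rewrite mul0r.
  by case/eqP: z'x; apply: zfun_inj; rewrite zfun_histz xz'.
rewrite /rshuffle zfun_histz eqxx mul1r /rkRR zfun_histz.
rewrite [RHS]exchange_big /= [in LHS]big_mkcond mulr_sumr; apply: eq_bigr => m _ /=.
rewrite /shuffle; case: ifP => _.
  by rewrite mulr_sumr; apply: eq_bigl => y; rewrite histz_eq.
by rewrite mulr0 big1 // => y _; rewrite mul0r.
Qed.

End ShuffleKRR.

Theorem mainTheorem5 (R : realType) (n : nat) (K : finType) (eps : R) :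
  (1 <= n)%N -> (2 <= #|K|)%N -> 0 <= eps ->
  let p := expR eps / (#|K|%:R - 1 + expR eps) in
  chan_equiv (cascade (@shuffle R K n) (@kRR R K n p))
             (cascade (@rshuffle R K n) (@rkRR R K n p)).
Proof.
move=> _ _ _ p W _ pi g _ _ _.
apply: (@Vg_merge_columns _ _ _ _ _ (histz K n)); last exact: rshuffle_rkRR_sum.
move=> x y y' /(congr1 (@zfun K n)); rewrite !zfun_histz.
exact: shuffle_kRR_hist.
Qed.
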